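(* Let $K$ be a field with $\operatorname{char} K\neq 2$, $R=K[x_1,\dots,x_6]$ and $I=(x_1x_3,\ x_1x_4,\ x_1x_6,\ x_2x_4,\ x_2x_5,\ x_2x_6,\ x_3x_5,\ x_3x_6,\ x_4x_5x_6)$. Then $$I=\sqrt{(x_1x_4+x_3x_5,\ x_1x_3+x_2x_6+x_4x_5x_6,\ x_1x_6+x_2x_5,\ x_2x_4+x_3x_6)}.$$ *)

From HB Require Import structures.
From mathcomp Require Import all_boot all_order all_algebra.
From mathcomp Require Import mpoly.
Set Implicit Arguments. Unset Strict Implicit. Unset Printing Implicit Defensive.
Import GRing.Theory.
Local Open Scope ring_scope.

Definition in_ideal (R : comRingType) (gs : seq R) (p : R) : Prop :=
  exists c : 'I_(size gs) -> R, p = \sum_(i < size gs) c i * gs`_i.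

Definition in_radical (R : comRingType) (gs : seq R) (p : R) : Prop :=
  exists n : nat, in_ideal gs (p ^+ n).

Definition xv (K : fieldType) (i : nat) : {mpoly K[6]} := 'X_(inord i.-1).

Definition I_gens (K : fieldType) : seq {mpoly K[6]} :=
  [:: xv K 1 * xv K 3; xv K 1 * xv K 4; xv K 1 * xv K 6;
      xv K 2 * xv K 4; xv K 2 * xv K 5; xv K 2 * xv K 6;
      xv K 3 * xv K 5; xv K 3 * xv K 6; xv K 4 * xv K 5 * xv K 6].

Definition J_gens (K : fieldType) : seq {mpoly K[6]} :=
  [:: xv K 1 * xv K 4 + xv K 3 * xv K 5;
      xv K 1 * xv K 3 + xv K 2 * xv K 6 + xv K 4 * xv K 5 * xv K 6;
      xv K 1 * xv K 6 + xv K 2 * xv K 5;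
      xv K 2 * xv K 4 + xv K 3 * xv K 6].

From HB Require Import structures.
From mathcomp Require Import all_boot all_order all_algebra.
From mathcomp Require Import mpoly ring.
Set Implicit Arguments. Unset Strict Implicit. Unset Printing Implicit Defensive.
Import GRing.Theory.
Local Open Scope ring_scope.

(* Every generator of J is a sum of generators of I, so sqrt J lies in sqrt I.
   Conversely, twice the square or cube of each generator of I is an explicit
   combination of the generators of J, so I lies in sqrt J as soon as 2 is
   invertible.  It remains that I is radical, being generated by squarefree
   monomials: write p = q + r with q in I and r supported on monomials outside
   I; if p^n lies in I then so does r^n, whose leading monomial is n times that
   of r, hence outside I again by squarefreeness, unless r = 0. *)

Section IdealMembership.
Variable R : comNzRingType.
Implicit Types (gs hs : seq R) (p q r a : R).

Lemma in_ideal0 gs : in_ideal gs 0.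
Proof. by exists (fun _ => 0); rewrite big1 // => i _; rewrite mul0r. Qed.

Lemma in_idealD gs p q : in_ideal gs p -> in_ideal gs q -> in_ideal gs (p + q).
Proof.
move=> [c ->] [d ->]; exists (fun i => c i + d i); rewrite -big_split.
by apply: eq_bigr => i _; rewrite mulrDl.
Qed.

Lemma in_idealM gs a p : in_ideal gs p -> in_ideal gs (a * p).
Proof.
move=> [c ->]; exists (fun i => a * c i); rewrite mulr_sumr.
by apply: eq_bigr => i _; rewrite mulrA.
Qed.

Lemma in_idealMn gs p k : in_ideal gs p -> in_ideal gs (p *+ k).
Proof. by rewrite -mulr_natl; apply: in_idealM. Qed.

Lemma in_idealKl gs a b p : b * a = 1 -> in_ideal gs (a * p) -> in_ideal gs p.
Proof. by move=> ba /(in_idealM b); rewrite mulrA ba mul1r. Qed.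

Lemma in_ideal_mem gs g : g \in gs -> in_ideal gs g.
Proof.
move=> g_gs; have gi : (index g gs < size gs)%N by rewrite index_mem.
exists (fun j => (j == Ordinal gi)%:R).
rewrite (bigD1 (Ordinal gi)) //= eqxx mul1r nth_index // big1 ?addr0 //.
by move=> j /negbTE ->; rewrite mul0r.
Qed.

Lemma in_ideal_ind gs (P : R -> Prop) :
  P 0 -> (forall p q, P p -> P q -> P (p + q)) -> (forall a p, P p -> P (a * p)) ->
  (forall i : 'I_(size gs), P gs`_i) -> forall p, in_ideal gs p -> P p.
Proof. by move=> P0 PD PM Pg p [c ->]; apply: (big_ind P) => // i _; apply/PM/Pg. Qed.

Lemma in_ideal_trans gs hs p :
  (forall i : 'I_(size gs), in_ideal hs gs`_i) -> in_ideal gs p -> in_ideal hs p.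
Proof.
move=> gs_hs; apply: in_ideal_ind => //;
  [exact: in_ideal0 | exact: in_idealD | exact: in_idealM].
Qed.

Lemma in_ideal_expDl gs q r n :
  in_ideal gs q -> in_ideal gs ((q + r) ^+ n) -> in_ideal gs (r ^+ n).
Proof.
move=> Iq Iqrn; have := subrXX (q + r) r n; rewrite addrK => e.
have -> : r ^+ n = (q + r) ^+ n - q * \sum_(i < n) (q + r) ^+ (n.-1 - i) * r ^+ i.
  by rewrite -e opprB addrC subrK.
by rewrite -mulrN mulrC; apply: in_idealD => //; apply: in_idealM.
Qed.

Lemma in_radical0 gs : in_radical gs 0.
Proof. by exists 1%N; rewrite expr1; apply: in_ideal0. Qed.

Lemma in_radicalM gs a p : in_radical gs p -> in_radical gs (a * p).
Proof. by move=> [n hn]; exists n; rewrite exprMn; apply: in_idealM. Qed.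

(* In the binomial expansion of (p + q)^(m + n) each term contains p^m or q^n. *)
Lemma in_radicalD gs p q : in_radical gs p -> in_radical gs q -> in_radical gs (p + q).
Proof.
move=> [m hm] [n hn]; exists (m + n)%N; rewrite exprDn.
apply: (big_ind (in_ideal gs)); [exact: in_ideal0 | exact: in_idealD |].
move=> [i hi] _ /=; apply: in_idealMn.
have [lt_in | le_ni] := ltnP i n.
  have -> : (m + n - i = (m + n - i - m) + m)%N.
    by rewrite subnK // -addnBA ?leq_addr // ltnW.
  by rewrite exprD mulrAC; apply: in_idealM.
by rewrite -(subnK le_ni) exprD mulrA; apply: in_idealM.
Qed.

Lemma ideal_in_radical gs hs p :
  (forall i : 'I_(size gs), in_radical hs gs`_i) -> in_ideal gs p -> in_radical hs p.
Proof.
move=> gs_hs; apply: in_ideal_ind => //;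
  [exact: in_radical0 | exact: in_radicalD | exact: in_radicalM].
Qed.

End IdealMembership.

Definition mdivisible {n} (ms : seq 'X_{1..n}) (m : 'X_{1..n}) :=
  has (fun g => (g <= m)%MM) ms.

Definition msquarefree {n} (g : 'X_{1..n}) := [forall i, g i <= 1]%N.

Section SquarefreeMonomialIdeal.
Variables (n : nat) (K : idomainType) (ms : seq 'X_{1..n}).

Local Notation I := [seq 'X_[g] | g <- ms] (only parsing).

Lemma mcoeffMX_eq0 (p : {mpoly K[n]}) g m : ~~ (g <= m)%MM -> (p * 'X_[g])@_m = 0.
Proof.
move=> not_gm; apply/eqP; rewrite mcoeff_eq0 (perm_mem (msuppMX p g)).
by apply: contra not_gm => /mapP [m' _ ->]; apply: lem_addr.
Qed.

Lemma monomial_ideal_mcoeff (p : {mpoly K[n]}) m :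
  in_ideal I p -> ~~ mdivisible ms m -> p@_m = 0.
Proof.
move=> [c ->] not_div; rewrite raddf_sum; apply: big1 => i _ /=.
have i_ms : (i < size ms)%N by rewrite -(size_map (fun g => 'X_[g] : {mpoly K[n]})).
rewrite (nth_map 0%MM) //; apply: mcoeffMX_eq0.
by apply: contra not_div => le_gm; apply/hasP; exists (nth 0%MM ms i); rewrite ?mem_nth.
Qed.

Lemma monomial_ideal_mpolyX m : mdivisible ms m -> in_ideal I ('X_[m] : {mpoly K[n]}).
Proof.
case/hasP => g g_ms le_gm; rewrite -(submK le_gm) mpolyXD.
by apply: in_idealM; apply: in_ideal_mem; apply: map_f.
Qed.

Hypothesis ms_squarefree : all msquarefree ms.

Lemma mdivisible_mulmn m k : mdivisible ms (m *+ k.+1)%MM -> mdivisible ms m.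
Proof.
case/hasP => g g_ms le_gmk; apply/hasP; exists g => //; apply/mnm_lepP => i.
have /forallP/(_ i) g1 := allP ms_squarefree g g_ms.
move/mnm_lepP/(_ i): le_gmk; rewrite mulmnE.
by have [->|m_pos] := posnP (m i); [rewrite mul0n | move=> _; apply: leq_trans g1 _].
Qed.

Theorem squarefree_monomial_ideal_radical (p : {mpoly K[n]}) k :
  in_ideal I (p ^+ k) -> in_ideal I p.
Proof.
case: k => [|k] Ipk; first by rewrite -[p]mulr1; apply: in_idealM.
pose q : {mpoly K[n]} := \sum_(m <- msupp p | mdivisible ms m) p@_m *: 'X_[m].
pose r : {mpoly K[n]} := \sum_(m <- msupp p | ~~ mdivisible ms m) p@_m *: 'X_[m].
have p_qr : p = q + r by rewrite {1}[p]mpolyE (bigID (mdivisible ms)).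
have Iq : in_ideal I q.
  apply: (big_ind (in_ideal I)); [exact: in_ideal0 | exact: in_idealD |].
  by move=> m div_m; rewrite -mul_mpolyC; apply: in_idealM; apply: monomial_ideal_mpolyX.
have r_div m : mdivisible ms m -> r@_m = 0.
  move=> div_m; rewrite /r raddf_sum /=; apply: big1 => m' not_div_m'.
  rewrite mcoeffZ mcoeffX; case: eqP => [e | _]; last by rewrite mulr0.
  by rewrite e div_m in not_div_m'.
suff /eqP r0 : r == 0 by rewrite p_qr r0 addr0.
apply: contraT => r_neq0.
have Irk : in_ideal I (r ^+ k.+1) by apply: (in_ideal_expDl Iq); rewrite -p_qr.
have not_div : ~~ mdivisible ms (mlead r *+ k.+1)%MM.
  by apply: contra r_neq0 => /mdivisible_mulmn/r_div/eqP; rewrite mleadc_eq0.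
move/eqP: (monomial_ideal_mcoeff Irk not_div).
by rewrite mleadcX expf_eq0 mleadc_eq0 (negbTE r_neq0) andbF.
Qed.

End SquarefreeMonomialIdeal.

Section Generators.
Variables (R : comNzRingType) (x1 x2 x3 x4 x5 x6 : R).

Definition Iseq : seq R :=
  [:: x1 * x3; x1 * x4; x1 * x6; x2 * x4; x2 * x5; x2 * x6; x3 * x5; x3 * x6;
      x4 * x5 * x6].

Definition Jseq : seq R :=
  [:: x1 * x4 + x3 * x5; x1 * x3 + x2 * x6 + x4 * x5 * x6; x1 * x6 + x2 * x5;
      x2 * x4 + x3 * x6].

Lemma Jseq_in_Iseq : forall i : 'I_(size Jseq), in_ideal Iseq Jseq`_i.
Proof.
case => [[|[|[|[|//]]]] _] /=;
  by do !(apply: in_idealD || (apply: in_ideal_mem; rewrite !inE eqxx ?orbT)).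
Qed.

Variable h : R.
Hypothesis h_half : h * 2 = 1.

Lemma in_Jseq_of_double p c0 c1 c2 c3 :
  2 * p = c0 * Jseq`_0 + c1 * Jseq`_1 + c2 * Jseq`_2 + c3 * Jseq`_3 ->
  in_ideal Jseq p.
Proof.
move=> e; apply: (in_idealKl h_half); rewrite e.
exists (fun i => [:: c0; c1; c2; c3]`_i).
by rewrite !big_ord_recl big_ord0 addr0 /= !addrA.
Qed.

Lemma Iseq_in_radical : forall i : 'I_(size Iseq), in_radical Jseq Iseq`_i.
Proof.
case => [[|[|[|[|[|[|[|[|[|//]]]]]]]]] _] /=.
- exists 2%N; apply: (@in_Jseq_of_double _ (-x3*x5*x6 + x2^+2) (2*x1*x3)
    (-x3*x4*x5 - x2*x3) (x3*x5^+2 - x1*x2)) => /=; ring.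
- exists 3%N; apply: (@in_Jseq_of_double _
    (-x4^+2*x5^+2*x6 + x3*x5*x6^+2 - 2*x1*x3*x4*x5 + 2*x1^+2*x4^+2)
    (2*x3*x4*x5^+2) (x4^+3*x5^+2 - x3*x4*x5*x6) (-x4^+2*x5^+3 - x3*x5^+2*x6)) => /=;
  ring.
- exists 3%N; apply: (@in_Jseq_of_double _ (x1*x5^+2*x6^+2 - x1^+2*x2*x5)
    (x1*x2*x5^+2 - x1^+2*x5*x6)
    (-x3*x5^+3*x6 - x2*x4*x5^+3 - x1*x2*x5*x6 + 2*x1^+2*x6^+2)
    (x2*x5^+4 + x1^+3*x5)) => /=; ring.
- exists 3%N; apply: (@in_Jseq_of_double _
    (-x3*x4^+2*x6^+2 + x3^+3*x6 + 2*x2*x3^+2*x4) (-2*x2*x3*x4^+2)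
    (x3*x4^+3*x6 - x3^+3*x4) (x3*x4^+2*x5*x6 - x3^+3*x5 + 2*x2^+2*x4^+2)) => /=;
  ring.
- exists 3%N; apply: (@in_Jseq_of_double _ (-x1*x5^+2*x6^+2 + x1^+2*x2*x5)
    (-x1*x2*x5^+2 + x1^+2*x5*x6)
    (x3*x5^+3*x6 + x2*x4*x5^+3 + 2*x2^+2*x5^+2 - x1*x2*x5*x6)
    (-x2*x5^+4 - x1^+3*x5)) => /=; ring.
- exists 2%N; apply: (@in_Jseq_of_double _ (x6^+3 + x2^+2) (2*x2*x6)
    (-x4*x6^+2 - x2*x3) (-x5*x6^+2 - x1*x2)) => /=; ring.
- exists 3%N; apply: (@in_Jseq_of_double _
    (x4^+2*x5^+2*x6 - x3*x5*x6^+2 + 2*x3^+2*x5^+2) (-2*x3*x4*x5^+2)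
    (-x4^+3*x5^+2 + x3*x4*x5*x6) (x4^+2*x5^+3 + x3*x5^+2*x6)) => /=; ring.
- exists 3%N; apply: (@in_Jseq_of_double _ (x3*x4^+2*x6^+2 + x3^+3*x6)
    (-2*x3^+2*x4*x6) (-x3*x4^+3*x6 + x3^+3*x4)
    (x3*x4^+2*x5*x6 + 2*x3^+2*x6^+2 - x3^+3*x5)) => /=; ring.
- exists 2%N; apply: (@in_Jseq_of_double _ (x6^+3 - x3*x5*x6) (2*x4*x5*x6)
    (-x4*x6^+2 - x3*x4*x5) (-x5*x6^+2 + x3*x5^+2)) => /=; ring.
Qed.

End Generators.

Definition mX (i : nat) : 'X_{1..6} := U_(inord i.-1)%MM.

Definition I_exponents : seq 'X_{1..6} :=
  [:: mX 1 + mX 3; mX 1 + mX 4; mX 1 + mX 6; mX 2 + mX 4; mX 2 + mX 5;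
      mX 2 + mX 6; mX 3 + mX 5; mX 3 + mX 6; mX 4 + mX 5 + mX 6]%MM.

Lemma I_gensE (K : fieldType) : I_gens K = [seq 'X_[m] | m <- I_exponents].
Proof. by rewrite /= !mpolyXD. Qed.

Lemma mXE k (i : 'I_6) : (k <= 6)%N -> mX k i = (k.-1 == i).
Proof. by move=> k6; rewrite mnm1E -val_eqE /= inordK //; case: k k6. Qed.

Lemma I_exponents_squarefree : all msquarefree I_exponents.
Proof.
rewrite /= andbT; do !(apply/andP; split);
  by apply/forallP => -[[|[|[|[|[|[|//]]]]]] lt_i6]; rewrite !mnmDE !mXE.
Qed.

Theorem mainTheorem8 (K : fieldType) (hK : 2%N \notin [pchar K]) :
  forall p : {mpoly K[6]}, in_ideal (I_gens K) p <-> in_radical (J_gens K) p.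
Proof.
have half : (2^-1)%:MP * 2 = 1 :> {mpoly K[6]}.
  have two_neq0 : (2 : K) != 0 by apply: contra hK => e; rewrite inE /= e.
  by rewrite -mpolyC_nat -mpolyCM mulVf ?mpolyC1.
pose x := xv K.
move=> p; split => [Ip | [k Jpk]].
  exact: ideal_in_radical (@Iseq_in_radical _ (x 1) (x 2) (x 3) (x 4) (x 5) (x 6) _ half) Ip.
rewrite I_gensE; apply: (squarefree_monomial_ideal_radical I_exponents_squarefree).
rewrite -I_gensE.
exact: in_ideal_trans (@Jseq_in_Iseq _ (x 1) (x 2) (x 3) (x 4) (x 5) (x 6)) Jpk.
Qed.
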